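(* Let $\mathcal{L}$ be a lattice and assume a function $f$ (mapping finite subsets of $\mathcal{L}$ to finite subsets of $\mathcal{L}$) that is computable in time $O(t(n))$ on inputs of size $n$ and is such that $C(S)\subseteq f(S)$ for all finite $S\subseteq\mathcal{L}$. Then $C(S)$ can be computed in time $O\big(t(|S|)+|f(S)|\,|S|\big)$.
   Context: A lattice means a partially ordered set $(\mathcal{L},\sqsubseteq)$ with least element $\bot$ in which any two elements have a least upper bound $\sqcup$; $\bigsqcup S$ denotes the least upper bound of a finite set ($\bigsqcup\emptyset=\bot$). The closure set of a finite $S$ is $C(S)=\{\bigsqcup S' : S'\subseteq S\}$. Cost model: all lattice operations ($\sqsubseteq$, $\sqcup$, equality of elements) take constant time. *)

From HB Require Import structures.
From mathcomp Require Import all_boot all_order.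
From mathcomp Require Import finmap.

Set Implicit Arguments.
Unset Strict Implicit.
Unset Printing Implicit Defensive.

Import Order.TTheory.

(* A lattice in the paper's sense = poset with bottom and binary joins       *)
(* = bJoinSemilatticeType.                                                   *)
Section Closure.
Context {d : Order.disp_t} {T : bJoinSemilatticeType d}.
Local Open Scope fset_scope.

Definition bigjoin (S : {fset T}) : T :=
  \big[@Order.join d T / @Order.bottom d T]_(x <- S) x.

Definition closure_set (S : {fset T}) : {fset T} :=
  [fset bigjoin S' | S' in fpowerset S].
End Closure.

(* Cost model: a unit-cost random access machine over the lattice.          *)
(* It has nat registers, element registers, a nat memory and an element     *)
(* memory (all indexed by nat).  Lattice elements are only accessible        *)
(* through the lattice primitives (bottom, join, order test, equality test), *)
(* each costing one step, as every other instruction.                        *)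
Inductive instr : Type :=
  | NConst of nat & nat
  | NAdd of nat & nat & nat
  | NSub of nat & nat & nat
  | NLoad of nat & nat
  | NStore of nat & nat
  | EBot of nat
  | EJoin of nat & nat & nat
  | ELe of nat & nat & nat
  | EEq of nat & nat & nat
  | ELoad of nat & nat
  | EStore of nat & nat
  | Jz of nat & nat
  | Jmp of nat
  | Halt.

Definition program := seq instr.

Section Machine.
Context {d : Order.disp_t} {T : bJoinSemilatticeType d}.

Record state := State {
  pc : nat;
  nreg : nat -> nat;
  ereg : nat -> T;
  nmem : nat -> nat;
  emem : nat -> T
}.

Definition upd {A : Type} (f : nat -> A) (i : nat) (v : A) : nat -> A :=
  fun j => if j == i then v else f j.

(* One step; [None] means the machine has halted (Halt, or pc out of range). *)
Definition step (P : program) (st : state) : option state :=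
  let: State p nr er nm em := st in
  match nth Halt P p with
  | NConst r k => Some (State p.+1 (upd nr r k) er nm em)
  | NAdd r a b => Some (State p.+1 (upd nr r (nr a + nr b)) er nm em)
  | NSub r a b => Some (State p.+1 (upd nr r (nr a - nr b)) er nm em)
  | NLoad r a => Some (State p.+1 (upd nr r (nm (nr a))) er nm em)
  | NStore a r => Some (State p.+1 nr er (upd nm (nr a) (nr r)) em)
  | EBot e => Some (State p.+1 nr (upd er e (@Order.bottom d T)) nm em)
  | EJoin e a b => Some (State p.+1 nr (upd er e (@Order.join d T (er a) (er b))) nm em)
  | ELe r a b => Some (State p.+1 (upd nr r (nat_of_bool (@Order.le d T (er a) (er b)))) er nm em)
  | EEq r a b => Some (State p.+1 (upd nr r (nat_of_bool (er a == er b))) er nm em)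
  | ELoad e a => Some (State p.+1 nr (upd er e (em (nr a))) nm em)
  | EStore a e => Some (State p.+1 nr er nm (upd em (nr a) (er e)))
  | Jz r l => Some (State (if nr r == 0 then l else p.+1) nr er nm em)
  | Jmp l => Some (State l nr er nm em)
  | Halt => None
  end.

Fixpoint halts_in (P : program) (k : nat) (st st' : state) : Prop :=
  match k with
  | 0 => step P st = None /\ st' = st
  | k'.+1 => exists st1, step P st = Some st1 /\ halts_in P k' st1 st'
  end.

(* Input convention: a finite set is given as a duplicate-free list s;
   R[0] = size s and EM[0 .. size s - 1] = s; everything else is 0 / bottom. *)
Definition init_state (s : seq T) : state :=
  State 0 (upd (fun _ => 0) 0 (size s)) (fun _ => @Order.bottom d T)
        (fun _ => 0) (fun i => nth (@Order.bottom d T) s i).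

(* Output convention: R[0] = m and EM[0 .. m-1] is a duplicate-free list. *)
Definition output (st : state) : seq T := mkseq (emem st) (nreg st 0).

Definition computes_within (P : program) (F : {fset T} -> {fset T})
    (B : {fset T} -> nat) : Prop :=
  forall s : seq T, uniq s ->
    exists k st', k <= B [fset x | x in s]%fset /\ halts_in P k (init_state s) st' /\
      uniq (output st') /\ [fset x | x in output st']%fset = F [fset x | x in s]%fset.

End Machine.

(** An element [y] lies in [C(S)] iff [y = \join_(x in S | x <= y) x], so
   [C(S)] is cut out of the candidates [f(S)] by [|f(S)|] tests costing
   [O(|S|)] each.  The program first spreads the input so that the memory of
   [Pf] lives on the even addresses and a copy of [S] on the odd ones, then
   runs [Pf] with every memory access [a] redirected to [a + a] by one extra
   address-doubling instruction (so in at most twice its time), and finally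
   runs these tests on its output.  For [S] empty, [C(S) = {bot}] is written
   directly. *)

From mathcomp Require Import all_boot all_order.
From mathcomp Require Import finmap.
From mathcomp Require Import zify.

Set Implicit Arguments.
Unset Strict Implicit.
Unset Printing Implicit Defensive.

Import Order.TTheory.

Section Execution.
Context {d : Order.disp_t} {T : bJoinSemilatticeType d}.
Local Notation state := (@state d T).

Fixpoint runs (P : program) (k : nat) (st st' : state) : Prop :=
  match k with
  | 0 => st' = st
  | k'.+1 => exists st1, step P st = Some st1 /\ runs P k' st1 st'
  end.

Lemma runs_add P k1 k2 st1 st2 st3 :
  runs P k1 st1 st2 -> runs P k2 st2 st3 -> runs P (k1 + k2) st1 st3.
Proof.
elim: k1 st1 => [|k IH] st1 /=; first by move=> ->.
by move=> [s [Hs Hr]] H2; exists s; split=> //; apply: IH Hr H2.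
Qed.

Lemma halts_inE P k st st' :
  halts_in P k st st' <-> runs P k st st' /\ step P st' = None.
Proof.
elim: k st => [|k IH] st /=; first by split=> [[H ->]|[-> H]].
split=> [[s [Hs /IH [Hr Hn]]]|[[s [Hs Hr]] Hn]]; first by split=> //; exists s.
by exists s; split=> //; apply/IH.
Qed.

Definition reaches_within (P : program) (st : state) (B : nat) (Q : state -> Prop) :=
  exists st' k, k <= B /\ runs P k st st' /\ Q st'.

Lemma reaches_now P st Q : Q st -> reaches_within P st 0 Q.
Proof. by move=> Hq; exists st, 0. Qed.

Lemma reaches_step P st st1 B Q :
  step P st = Some st1 -> 0 < B -> reaches_within P st1 (B - 1) Q ->
  reaches_within P st B Q.
Proof.
move=> H HB [s [k [Hk [R Hq]]]]; exists s, k.+1; split; first lia.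
by split=> //; exists st1.
Qed.

Lemma reaches_runs P k st st1 B Q :
  runs P k st st1 -> reaches_within P st1 B Q -> reaches_within P st (k + B) Q.
Proof.
move=> R [s' [k' [Hk [R' Hq]]]]; exists s', (k + k'); split; first lia.
by split=> //; apply: runs_add R R'.
Qed.

Lemma reaches_le P st B B' Q :
  B <= B' -> reaches_within P st B Q -> reaches_within P st B' Q.
Proof. by move=> HB [s [k [Hk [R Hq]]]]; exists s, k; split=> //; lia. Qed.

Lemma reaches_seq P st B1 B2 Q1 Q :
  reaches_within P st B1 Q1 -> (forall s, Q1 s -> reaches_within P s B2 Q) ->
  reaches_within P st (B1 + B2) Q.
Proof.
move=> [s [k [Hk [R Hq]]]] /(_ s Hq) /(reaches_runs R).
by apply: reaches_le; rewrite leq_add2r.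
Qed.

Lemma reaches_impl P st B Q Q' :
  (forall s, Q s -> Q' s) -> reaches_within P st B Q -> reaches_within P st B Q'.
Proof. by move=> HQ [s [k [Hk [R Hq]]]]; exists s, k; do 2 split=> //; apply: HQ. Qed.

End Execution.

Section ClosureMembership.
Context {d : Order.disp_t} {T : bJoinSemilatticeType d}.
Local Open Scope order_scope.
Local Open Scope fset_scope.

Definition join_below (s : seq T) (y : T) : T := \join_(x <- s | x <= y) x.

Lemma join_below_le s y : join_below s y <= y.
Proof. exact: joins_le. Qed.

Lemma mem_closure_set (s : seq T) y :
  (y \in closure_set [fset x | x in s]) = (join_below s y == y).
Proof.
apply/idP/idP.
- case/imfsetP=> S' /=; rewrite fpowersetE => /fsubsetP sS' ->.
  rewrite eq_le join_below_le /=.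
  apply/joinsP_seq => x S'x _; apply: joins_sup_seq; last exact: joins_sup_seq.
  by move: (sS' x S'x); rewrite inE.
- move=> /eqP Hy; apply/imfsetP; exists [fset x | x in s & x <= y] => /=.
    by rewrite fpowersetE; apply/fsubsetP => x; rewrite !inE => /andP [].
  rewrite -{1}Hy; apply/eqP; rewrite eq_le; apply/andP; split.
    apply/joinsP_seq => x sx xy; apply: joins_sup_seq => //.
    by rewrite !inE sx xy.
  apply/joinsP_seq => x; rewrite !inE => /andP [sx xy] _.
  exact: joins_sup_seq.
Qed.

Lemma bottom_in_closure_set (s : seq T) : \bot \in closure_set [fset x | x in s].
Proof. by rewrite mem_closure_set eq_le le0x join_below_le. Qed.

Lemma closure_set_nil : closure_set [fset x | x in [::] : seq T] = [fset x | x in [:: \bot]].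
Proof.
apply/fsetP => y; rewrite mem_closure_set /join_below big_nil !inE.
by rewrite eq_sym orbF.
Qed.

Lemma closure_set_filter (s F : seq T) :
  closure_set [fset x | x in s] `<=` [fset x | x in F] ->
  [fset y | y in [seq y <- F | join_below s y == y]] = closure_set [fset x | x in s].
Proof.
move=> /fsubsetP sCF; apply/fsetP => y; rewrite !inE /= mem_filter.
apply/andP/idP => [[/eqP Jy _]|Cy]; first by rewrite mem_closure_set Jy.
by split; [rewrite -mem_closure_set | move: (sCF y Cy); rewrite inE].
Qed.

End ClosureMembership.

Section FilterPhase.
Context {d : Order.disp_t} {T : bJoinSemilatticeType d}.
Local Notation bot := (@Order.bottom d T).
Local Notation join := (@Order.join d T).
Variables (P : program) (ofs X : nat) (s : seq T).
Hypothesis X_gt0 : 0 < X.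

(* Loaded at address [ofs]; registers [X+1 .. X+10] are its own.  The memory
   holds the candidates at [EM[0], EM[2], ..., EM[2m-2]] with [m = R[0]],
   [s] at the odd addresses and [M[1] = size s].  The first loop (pc 5-23)
   stores at [M[2j]] whether candidate [j] equals its [join_below s], the
   second (pc 24-35) packs the candidates so flagged into [EM[0 .. w-1]].
   Addresses 38-39 serve the empty input, see [setup_prog]. *)
Definition filter_prog : program := [::
 (* 0 *) NConst (3+X) 1; NConst (4+X) 0; NAdd (5+X) 0 (4+X); NAdd (6+X) 0 (4+X);
 (* 4 *) NLoad (7+X) (3+X); Jz (6+X) (24+ofs); NSub (6+X) (6+X) (3+X); NAdd (2+X) (6+X) (6+X);
 (* 8 *) ELoad (1+X) (2+X); EBot (2+X); NAdd (1+X) (7+X) (4+X); Jz (1+X) (20+ofs);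
 (* 12 *) NSub (1+X) (1+X) (3+X); NAdd (2+X) (1+X) (1+X); NAdd (2+X) (2+X) (3+X); ELoad (3+X) (2+X);
 (* 16 *) ELe (8+X) (3+X) (1+X); Jz (8+X) (11+ofs); EJoin (2+X) (3+X) (2+X); Jmp (11+ofs);
 (* 20 *) EEq (8+X) (2+X) (1+X); NAdd (2+X) (6+X) (6+X); NStore (2+X) (8+X); Jmp (5+ofs);
 (* 24 *) NConst (9+X) 0; NConst (6+X) 0; NSub (10+X) (5+X) (6+X); Jz (10+X) (36+ofs);
 (* 28 *) NAdd (2+X) (6+X) (6+X); NLoad (8+X) (2+X); Jz (8+X) (34+ofs); ELoad (1+X) (2+X);
 (* 32 *) EStore (9+X) (1+X); NAdd (9+X) (9+X) (3+X); NAdd (6+X) (6+X) (3+X); Jmp (26+ofs);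
 (* 36 *) NAdd 0 (9+X) (4+X); Halt; NConst 0 1; Halt].

Hypothesis filter_prog_at : forall k, nth Halt P (k + ofs) = nth Halt filter_prog k.

Lemma eq0_addX k : (0 == k + X) = false.
Proof. by apply/eqP; lia. Qed.

Lemma eq_addX0 k : (k + X == 0) = false.
Proof. by apply/eqP; lia. Qed.

Ltac exec_step :=
  eapply reaches_step; [rewrite /step filter_prog_at /=; reflexivity|lia|];
  rewrite -?addSn.
Ltac upd_simpl := rewrite /upd ?eqn_add2r ?eq0_addX ?eq_addX0 /=.

Definition join_below_from (i : nat) (y : T) : T :=
  \big[join/bot]_(i <= q < size s | (nth bot s q <= y)%O) nth bot s q.

Lemma join_below_from0 y : join_below_from 0 y = join_below s y.
Proof. by rewrite /join_below_from /join_below (big_nth bot). Qed.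

Lemma join_below_from_size y : join_below_from (size s) y = bot.
Proof. by rewrite /join_below_from big_geq. Qed.

Lemma join_below_fromS i y : i < size s ->
  join_below_from i y = if (nth bot s i <= y)%O
                        then join (nth bot s i) (join_below_from i.+1 y)
                        else join_below_from i.+1 y.
Proof. by move=> lt_i; rewrite /join_below_from big_ltn_cond. Qed.

Lemma join_below_loop i nr0 nr er nm em y :
  i <= size s -> nr (1+X) = i -> nr (3+X) = 1 ->
  (forall r, r != 1+X -> r != 2+X -> r != 8+X -> nr r = nr0 r) ->
  er (1+X) = y -> er (2+X) = join_below_from i y ->
  (forall q, q < size s -> em (q+q+1) = nth bot s q) ->
  reaches_within P (State (11+ofs) nr er nm em) (9*i+1) (fun st =>
     pc st = 20+ofs /\ nmem st = nm /\ emem st = em /\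
     ereg st (2+X) = join_below s y /\ ereg st (1+X) = y /\
     forall r, r != 1+X -> r != 2+X -> r != 8+X -> nreg st r = nr0 r).
Proof.
elim: i nr er => [|i IH] nr er le_i Hi H1 Hfr Hy Hacc Hs.
  apply: (reaches_le (B := 1)); first lia.
  exec_step; rewrite Hi; apply: reaches_now; split=> //.
  by rewrite -join_below_from0.
exec_step; rewrite Hi /=; do 6 exec_step; upd_simpl.
rewrite Hi H1 Hy subn1 /= Hs //.
have Hacc' : join_below_from i y =
  if (nth bot s i <= y)%O then join (nth bot s i) (er (2+X)) else er (2+X).
  by rewrite Hacc join_below_fromS.
case E: (nth bot s i <= y)%O => /=; first do 2 exec_step.
all: apply: (reaches_le (B := 9*i+1)); first lia.
all: apply: IH; upd_simpl; rewrite ?Hacc' ?E //; first lia.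
all: move=> r r1 r2 r8.
all: by rewrite (negbTE r1) (negbTE r2) (negbTE r8); apply: Hfr.
Qed.

Definition in_closure_at (em : nat -> T) (j : nat) : bool :=
  join_below s (em (j+j)) == em (j+j).

Lemma flag_loop J (nr nm : nat -> nat) (er em : nat -> T) m :
  J <= m -> nr (6+X) = J -> nr (3+X) = 1 -> nr (4+X) = 0 -> nr (7+X) = size s ->
  nr (5+X) = m ->
  (forall q, q < size s -> em (q+q+1) = nth bot s q) ->
  (forall j, J <= j < m -> nm (j+j) = in_closure_at em j) ->
  reaches_within P (State (5+ofs) nr er nm em) (J*(9*size s + 11) + 1) (fun st =>
    pc st = 24+ofs /\ emem st = em /\ nreg st (3+X) = 1 /\ nreg st (4+X) = 0 /\
    nreg st (5+X) = m /\ forall j, j < m -> nmem st (j+j) = in_closure_at em j).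
Proof.
elim: J nr er nm => [|J IH] nr er nm le_J HJ H1 H0 Hn Hm Hs Hflags.
  apply: (reaches_le (B := 1)); first lia.
  by exec_step; rewrite HJ /=; apply: reaches_now; do 5 split=> //.
exec_step; rewrite HJ /=; do 5 exec_step.
apply: (reaches_le (B := (9*size s+1) + (4 + (J*(9*size s+11)+1)))); first nia.
apply: reaches_seq.
  apply: (join_below_loop (nr0 := upd (upd nr (6+X) J) (2+X) (J+J))) => //;
    upd_simpl; rewrite ?HJ ?Hn ?H0 ?H1 ?addn0 ?join_below_from_size //.
  by move=> r r1 r2 _; rewrite (negbTE r1) (negbTE r2) subn1.
move=> [p2 nr2 er2 nm2 em2] /= [-> [-> [-> [Hacc [Hy Hfr]]]]].
move: Hacc Hy; upd_simpl; rewrite HJ H1 subn1 /= => Hacc Hy.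
have [HJ2 H12 H02 Hn2 Hm2] : [/\ nr2 (6+X) = J, nr2 (3+X) = 1, nr2 (4+X) = 0,
                                 nr2 (7+X) = size s & nr2 (5+X) = m].
  by rewrite !Hfr //; upd_simpl; rewrite ?HJ ?H1 ?H0 ?Hn ?Hm ?subn1.
do 4 exec_step; apply: (reaches_le (B := J*(9*size s+11)+1)); first lia.
apply: IH; upd_simpl; rewrite ?HJ2 ?H12 ?H02 ?Hn2 ?Hm2 ?subn1 //; first lia.
move=> j /andP [le_Jj lt_jm]; rewrite Hacc Hy.
have [->|neq_jJ] := eqVneq j J; first by rewrite eqxx.
rewrite (_ : (j + j == J + J) = false); last by apply/eqP; lia.
apply: Hflags; lia.
Qed.

Definition survivors (em : nat -> T) (m : nat) : seq T :=
  [seq em (j+j) | j <- iota 0 m & in_closure_at em j].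

Lemma survivorsS em m :
  survivors em m.+1 = survivors em m ++ (if in_closure_at em m then [:: em (m+m)] else [::]).
Proof. by rewrite /survivors -addn1 iotaD filter_cat map_cat /=; case: in_closure_at. Qed.

Lemma size_survivors em m : size (survivors em m) <= m.
Proof. by rewrite size_map size_filter (leq_trans (count_size _ _)) // size_iota. Qed.

Lemma survivorsE em (g : nat -> T) m :
  (forall j, em (j+j) = g j) ->
  survivors em m = [seq y <- mkseq g m | join_below s y == y].
Proof.
move=> emE; rewrite /survivors /mkseq filter_map (eq_map (g := g)) //.
by congr map; apply: eq_filter => j; rewrite /in_closure_at /= emE.
Qed.

(* The packed prefix [EM[0 .. w-1]] never reaches the unread candidates
   [EM[2j]], [j >= j0], since [w <= j0]. *)
Lemma compact_loop r j0 w (nr nm : nat -> nat) (er em em0 : nat -> T) m :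
  j0 + r = m -> nr (5+X) = m -> nr (6+X) = j0 -> nr (3+X) = 1 -> nr (4+X) = 0 ->
  nr (9+X) = w -> w = size (survivors em0 j0) ->
  (forall j, j < m -> nm (j+j) = in_closure_at em0 j) ->
  (forall q, q < w -> em q = nth bot (survivors em0 j0) q) ->
  (forall j, j0 <= j < m -> em (j+j) = em0 (j+j)) ->
  reaches_within P (State (26+ofs) nr er nm em) (10*r+3) (fun st =>
    pc st = 37+ofs /\ nreg st 0 = size (survivors em0 m) /\
    forall q, q < size (survivors em0 m) -> emem st q = nth bot (survivors em0 m) q).
Proof.
elim: r j0 w nr er em => [|r IH] j0 w nr er em Hr Hm Hj H1 H0 Hw w_def Hflags Hpacked Hrest.
  rewrite addn0 in Hr; rewrite -{}Hr in Hm Hflags Hrest *.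
  do 2 exec_step; upd_simpl; rewrite Hm Hj subnn /=; exec_step; apply: reaches_now.
  by upd_simpl; rewrite Hw H0 addn0 -w_def.
do 2 exec_step; upd_simpl; rewrite Hm Hj.
rewrite (_ : (m - j0 == 0) = false); last by apply/eqP; lia.
do 2 exec_step; upd_simpl; rewrite Hj Hflags; last lia.
have le_w_j0 : w <= j0 by rewrite w_def size_survivors.
exec_step; upd_simpl.
case E: (in_closure_at em0 j0) => /=.
- do 5 exec_step; apply: (reaches_le (B := 10*r+3)); first lia.
  apply: (IH j0.+1 w.+1); upd_simpl; rewrite ?Hm ?Hj ?H1 ?H0 ?Hw ?addn1 //; try lia.
  + by rewrite survivorsS E cats1 size_rcons -w_def.
  + move=> q lt_q; rewrite survivorsS E.
    have [->|neq_qw] := eqVneq q w.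
      by rewrite nth_cat -w_def ltnn subnn /= Hrest //; lia.
    rewrite Hpacked; last lia.
    by rewrite nth_cat -w_def (_ : q < w) //; lia.
  + move=> j lt_j; rewrite (_ : (j + j == w) = false); last by apply/eqP; lia.
    apply: Hrest; lia.
- do 2 exec_step; apply: (reaches_le (B := 10*r+3)); first lia.
  apply: (IH j0.+1 w); upd_simpl; rewrite ?Hm ?Hj ?H1 ?H0 ?Hw ?addn1 //; try lia.
  + by rewrite survivorsS E cats0.
  + by move=> q lt_q; rewrite survivorsS E cats0; apply: Hpacked.
  + move=> j lt_j; apply: Hrest; lia.
Qed.

Lemma filter_prog_correct nr nm er em m :
  nm 1 = size s -> nr 0 = m -> (forall q, q < size s -> em (q+q+1) = nth bot s q) ->
  reaches_within P (State (0+ofs) nr er nm em) (5 + (m*(9*size s+11)+1) + (2 + (10*m+3)))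
    (fun st => pc st = 37+ofs /\ nreg st 0 = size (survivors em m) /\
      forall q, q < size (survivors em m) -> emem st q = nth bot (survivors em m) q).
Proof.
move=> Hn Hm Hs.
do 5 exec_step.
apply: (reaches_le (B := (m*(9*size s+11)+1) + (2 + (10*m+3)))); first lia.
apply: reaches_seq.
  by apply: (@flag_loop m _ _ _ em m); upd_simpl; rewrite ?Hm ?Hn ?addn0 // => j; lia.
move=> [p2 nr2 er2 nm2 em2] /= [-> [-> [H1 [H0 [Hm2 Hflags]]]]].
do 2 exec_step; apply: (reaches_le (B := 10*m+3)); first lia.
by apply: (@compact_loop m 0 0 _ _ _ _ em m); upd_simpl; rewrite ?H1 ?H0 ?Hm2.
Qed.

End FilterPhase.

Section SetupPhase.
Context {d : Order.disp_t} {T : bJoinSemilatticeType d}.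
Local Notation bot := (@Order.bottom d T).
Variables (P : program) (ofs X : nat) (s : seq T).
Hypothesis X_gt0 : 0 < X.

(* Spreads the input [s] over [EM[2j] = EM[2j+1] = s_j] (from the top down, so
   that no [s_j] is overwritten before it is read) and sets [M[1] = size s].
   On empty input it jumps to address [38] of [filter_prog] loaded at [ofs]. *)
Definition setup_prog : program := [::
 (* 0 *) Jz 0 (38+ofs); NConst (3+X) 1; NStore (3+X) 0; NAdd (1+X) 0 (4+X);
 (* 4 *) Jz (1+X) 12; NSub (1+X) (1+X) (3+X); ELoad X (1+X); NAdd (2+X) (1+X) (1+X);
 (* 8 *) EStore (2+X) X; NAdd (2+X) (2+X) (3+X); EStore (2+X) X; Jmp 4].

Hypothesis setup_prog_at : forall k, k < 12 -> nth Halt P k = nth Halt setup_prog k.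

Ltac exec_step :=
  eapply reaches_step; [rewrite /step setup_prog_at //=; reflexivity|lia|].
Ltac upd_simpl := rewrite /upd ?eqxx ?eqn_add2r ?(eq_addX0 X_gt0) ?(eq0_addX X_gt0) /=.

Lemma eq_lt_addX j k : j < X -> (j == k + X) = false.
Proof. by move=> lt_jX; apply/eqP; lia. Qed.

Lemma setup_loop i nr er nm em :
  i <= size s -> nr (1+X) = i -> nr (3+X) = 1 ->
  (forall q, q < i -> em q = nth bot s q) ->
  (forall j, i <= j -> em (j+j) = nth bot s j /\ em (j+j+1) = nth bot s j) ->
  reaches_within P (State 4 nr er nm em) (8*i+1) (fun st =>
    pc st = 12 /\ nmem st = nm /\
    (forall j, j < X -> nreg st j = nr j) /\ (forall j, j < X -> ereg st j = er j) /\
    (forall j, emem st (j+j) = nth bot s j /\ emem st (j+j+1) = nth bot s j)).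
Proof.
elim: i nr er em => [|i IH] nr er em le_i Hi H1 Hlow Hhigh.
  apply: (reaches_le (B := 1)); first lia.
  exec_step; rewrite Hi; apply: reaches_now; do 4 split=> //.
  by move=> j; apply: Hhigh.
exec_step; rewrite Hi /=; do 7 exec_step.
apply: (reaches_le (B := 8*i+1)); first lia.
apply: reaches_impl (IH _ _ _ _ _ _ _ _); upd_simpl; rewrite ?Hi ?H1 ?subn1 //=.
- move=> st [-> [-> [Hn [He Hm]]]]; do 2 split=> //.
  split; last split; last done.
  + by move=> j lt_jX; rewrite Hn //; upd_simpl; rewrite !eq_lt_addX.
  + by move=> j lt_jX; rewrite He //; upd_simpl; rewrite ltn_eqF.
- lia.
- move=> q lt_qi.
  rewrite (_ : (q == i + i + 1) = false); last by apply/eqP; lia.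
  rewrite (_ : (q == i + i) = false); last by apply/eqP; lia.
  apply: Hlow; lia.
- have Hi_low : em i = nth bot s i by apply: Hlow.
  move=> j le_ij; have [->|neq_ji] := eqVneq j i.
    by rewrite !eqxx Hi_low; case: ifP.
  rewrite !ifN; try by apply/eqP; lia.
  apply: Hhigh; lia.
Qed.

Lemma setup_correct : 0 < size s ->
  reaches_within P (init_state s) (4 + (8*size s+1)) (fun st =>
    pc st = 12 /\
    (forall j, j < X -> nreg st j = nreg (init_state s) j) /\
    (forall j, j < X -> ereg st j = bot) /\
    (forall j, nmem st (j+j) = 0) /\ nmem st 1 = size s /\
    (forall j, emem st (j+j) = nth bot s j /\ emem st (j+j+1) = nth bot s j)).
Proof.
move=> s_gt0; rewrite /init_state.
exec_step; upd_simpl; rewrite (_ : (size s == 0) = false); last by apply/eqP; lia.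
do 3 exec_step.
apply: (reaches_le (B := 8*size s+1)); first lia.
apply: reaches_impl (@setup_loop (size s) _ _ _ _ _ _ _ _ _); upd_simpl => //.
- move=> st [-> [-> [Hn [He Hm]]]]; split=> //.
  split; first by move=> j lt_jX; rewrite Hn //; upd_simpl; rewrite !eq_lt_addX.
  split; first by move=> j lt_jX; rewrite He.
  split; first by move=> j; upd_simpl; rewrite (_ : (j + j == 1) = false) //; apply/eqP; lia.
  by split; first by upd_simpl.
- by rewrite addn0.
- by move=> j lt_j; rewrite !nth_default //; lia.
Qed.

End SetupPhase.

Section Compilation.
Context {d : Order.disp_t} {T : bJoinSemilatticeType d}.
Local Notation state := (@state d T).
Local Notation bot := (@Order.bottom d T).
Variable Pf : program.

Definition max_reg (i : instr) : nat :=
  match i with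
  | NConst r _ | EBot r | Jz r _ => r
  | NAdd r a b | NSub r a b | EJoin r a b | ELe r a b | EEq r a b => maxn r (maxn a b)
  | NLoad r a | NStore r a | ELoad r a | EStore r a => maxn r a
  | Jmp _ | Halt => 0
  end.

Definition scratch : nat := (foldr maxn 0 (map max_reg Pf)).+1.
Definition filter_ofs : nat := 12 + 2 * size Pf.
Definition compiled_pc (l : nat) : nat := 12 + 2 * minn l (size Pf).

(* Instruction [p] of [Pf] becomes the pair at [compiled_pc p]: the first one
   puts the doubled address [a + a] into the scratch register (or does nothing
   useful), the second one performs the access through it.  Leaving [Pf], by
   [Halt] or by jumping out of it, leads to the filter phase. *)
Definition compile_instr (i : instr) (second : bool) : instr :=
  let pad := NConst scratch 0 in
  match i with
  | NLoad r a => if second then NLoad r scratch else NAdd scratch a a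
  | NStore a r => if second then NStore scratch r else NAdd scratch a a
  | ELoad e a => if second then ELoad e scratch else NAdd scratch a a
  | EStore a e => if second then EStore scratch e else NAdd scratch a a
  | Jz r l => if second then Jz r (compiled_pc l) else pad
  | Jmp l => if second then Jmp (compiled_pc l) else pad
  | Halt => if second then Jmp filter_ofs else pad
  | i => if second then i else pad
  end.

Definition compiled : program :=
  mkseq (fun q => compile_instr (nth Halt Pf q./2) (odd q)) (2 * size Pf).

Definition closure_prog : program :=
  setup_prog filter_ofs scratch ++ compiled ++ filter_prog filter_ofs scratch.

Lemma scratch_gt0 : 0 < scratch. Proof. by []. Qed.

Lemma max_reg_lt_scratch p : max_reg (nth Halt Pf p) < scratch.
Proof.
case: (ltnP p (size Pf)) => lt_p; last by rewrite nth_default.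
rewrite /scratch ltnS.
elim: Pf p lt_p => [|i l IH] [|p] //= lt_p; first exact: leq_maxl.
exact: leq_trans (IH p lt_p) (leq_maxr _ _).
Qed.

Lemma closure_prog_setup_at k :
  k < 12 -> nth Halt closure_prog k = nth Halt (setup_prog filter_ofs scratch) k.
Proof. by move=> lt_k; rewrite /closure_prog nth_cat /= lt_k. Qed.

Lemma closure_prog_compiled_at q : q < 2 * size Pf ->
  nth Halt closure_prog (12 + q) = compile_instr (nth Halt Pf q./2) (odd q).
Proof.
move=> lt_q; rewrite /closure_prog nth_cat /= addKn nth_cat size_mkseq lt_q.
by rewrite nth_mkseq.
Qed.

Lemma closure_prog_first_at p : p < size Pf ->
  nth Halt closure_prog (compiled_pc p) = compile_instr (nth Halt Pf p) false.
Proof.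
move=> lt_p; rewrite /compiled_pc (minn_idPl (ltnW lt_p)) closure_prog_compiled_at; last lia.
by rewrite mul2n doubleK odd_double.
Qed.

Lemma closure_prog_second_at p : p < size Pf ->
  nth Halt closure_prog (compiled_pc p).+1 = compile_instr (nth Halt Pf p) true.
Proof.
move=> lt_p; rewrite /compiled_pc (minn_idPl (ltnW lt_p)) -addnS.
rewrite closure_prog_compiled_at; last lia.
by rewrite mul2n /= uphalf_double odd_double.
Qed.

Lemma closure_prog_filter_at k :
  nth Halt closure_prog (k + filter_ofs) = nth Halt (filter_prog filter_ofs scratch) k.
Proof.
rewrite /closure_prog nth_cat /= ltnNge (_ : 12 <= k + filter_ofs); last by rewrite /filter_ofs; lia.
rewrite /= nth_cat size_mkseq ltnNge (_ : 2 * size Pf <= k + filter_ofs - 12);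
  last by rewrite /filter_ofs; lia.
by congr nth; rewrite /filter_ofs; lia.
Qed.

Opaque closure_prog.

Definition layout_rel (s : seq T) (st st' : state) :=
  (forall j, j < scratch -> nreg st' j = nreg st j) /\
  (forall j, j < scratch -> ereg st' j = ereg st j) /\
  (forall j, nmem st' (j+j) = nmem st j) /\ (forall j, emem st' (j+j) = emem st j) /\
  nmem st' 1 = size s /\ (forall j, j < size s -> emem st' (j+j+1) = nth bot s j).

Definition sim_rel (s : seq T) (st st' : state) :=
  pc st' = compiled_pc (pc st) /\ layout_rel s st st'.

Lemma double_eq j a : (j + j == a + a) = (j == a).
Proof. by apply/eqP/eqP; lia. Qed.

Lemma odd_neq_double j a : (j + j + 1 == a + a) = false.
Proof. by apply/eqP; lia. Qed.

Lemma one_neq_double a : (1 == a + a) = false.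
Proof. by apply/eqP; lia. Qed.

Ltac upd_simpl :=
  rewrite /upd ?eqxx /=;
  repeat match goal with
  | h : is_true (?x < scratch) |- context [?x == scratch] => rewrite (ltn_eqF h)
  end; rewrite ?double_eq ?odd_neq_double ?one_neq_double.

Lemma compiled_step s st st1 st' : step Pf st = Some st1 -> sim_rel s st st' ->
  exists st1', runs closure_prog 2 st' st1' /\ sim_rel s st1 st1'.
Proof.
case: st => p nr er nm em; case: st' => p' nr' er' nm' em' /=.
case: (ltnP p (size Pf)) => lt_p; last by rewrite /step nth_default.
move=> Hstep [/= -> [/= Hn [/= He [/= Hnm [/= Hem [/= H1 Hodd]]]]]].
have lt_reg := max_reg_lt_scratch p.
move: Hstep; rewrite /step.
case Ei: (nth Halt Pf p) lt_reg => [r k|r a b|r a b|r a|a r|e|e a b|r a b|r a b|e a|a e|r l|l|]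
  /= lt_reg // [<-].
all: eexists; split;
  [do 2 (eexists; split;
     [rewrite /step /= ?closure_prog_first_at ?closure_prog_second_at // Ei /=; reflexivity|]);
   reflexivity|].
all: rewrite ?gtn_max in lt_reg;
  repeat match goal with h : is_true (_ && _) |- _ => case/andP: h => ? h end.
all: rewrite /sim_rel /layout_rel /=.
all: split; [|split; [move=> j lt_j; upd_simpl|split; [move=> j lt_j; upd_simpl|
        split; [move=> j; upd_simpl|split; [move=> j; upd_simpl|
        split; [upd_simpl|move=> j lt_j; upd_simpl]]]]]].
all: rewrite ?Hn ?He ?Hnm ?Hem ?H1 ?Hodd //.
all: try by rewrite /compiled_pc (minn_idPl lt_p); lia.
rewrite /upd (ltn_eqF lt_reg) Hn //; case: (nr r == 0) => //.
by rewrite /compiled_pc (minn_idPl lt_p); lia.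
Qed.

Lemma compiled_halt s st st' : step Pf st = None -> sim_rel s st st' ->
  reaches_within closure_prog st' 2 (fun st'' => pc st'' = filter_ofs /\ layout_rel s st st'').
Proof.
case: st => p nr er nm em; case: st' => p' nr' er' nm' em' /=.
move=> Hstep [/= -> Hlayout].
case: (ltnP p (size Pf)) => lt_p; last first.
  apply: (reaches_le (B := 0)) => //; apply: reaches_now; split=> //.
  by rewrite /compiled_pc (minn_idPr lt_p).
have Ei : nth Halt Pf p = Halt by move: Hstep; rewrite /step; case: (nth Halt Pf p).
do 2 (eapply reaches_step;
  [rewrite /step /= ?closure_prog_first_at ?closure_prog_second_at // Ei /=; reflexivity|done|]).
apply: reaches_now; split=> //.
case: Hlayout => /= Hn Hlayout; split=> // j lt_j.
by rewrite /= /upd (ltn_eqF lt_j) Hn.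
Qed.

Lemma compiled_run s k st stf st' : halts_in Pf k st stf -> sim_rel s st st' ->
  reaches_within closure_prog st' (2 * k + 2)
    (fun st'' => pc st'' = filter_ofs /\ layout_rel s stf st'').
Proof.
elim: k st st' => [|k IH] st st' /=; first by move=> [Hn ->]; apply: compiled_halt.
move=> [st1 [Hs Hh]] Hrel.
have [st1' [R Hrel1]] := compiled_step Hs Hrel.
rewrite (_ : 2 * k.+1 + 2 = 2 + (2 * k + 2)); last lia.
exact: reaches_runs R (IH _ _ Hh Hrel1).
Qed.

Lemma closure_prog_nil :
  exists st, halts_in closure_prog 2 (init_state [::]) st /\ output st = [:: bot].
Proof.
eexists; split.
  eexists; split; first by rewrite /step /= closure_prog_setup_at //=; reflexivity.
  eexists; split; first by rewrite /step /= (closure_prog_filter_at 38); reflexivity.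
  by split; [rewrite /step /= (closure_prog_filter_at 39) | reflexivity].
by [].
Qed.

Lemma closure_prog_reaches (s : seq T) k (stf : state) :
  0 < size s -> halts_in Pf k (init_state s) stf ->
  reaches_within closure_prog (init_state s)
    (2 * k + 8 * size s + 18 + size (output stf) * (9 * size s + 21))
    (fun st => pc st = 37 + filter_ofs /\
               output st = [seq y <- output stf | join_below s y == y]).
Proof.
move=> s_gt0 Hh; set m := size (output stf).
apply: (reaches_le (B := (4 + (8 * size s + 1)) +
  ((2 * k + 2) + (5 + (m * (9 * size s + 11) + 1) + (2 + (10 * m + 3)))))); first nia.
apply: reaches_seq; first exact: setup_correct scratch_gt0 closure_prog_setup_at s_gt0.
move=> st0 [Hpc0 [Hn0 [He0 [Hnm0 [H10 Hem0]]]]].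
apply: reaches_seq.
  apply: (compiled_run (s := s) Hh); split; first by rewrite Hpc0 /compiled_pc min0n.
  split; first exact: Hn0. split; first exact: He0. split; first exact: Hnm0.
  split; first by move=> j; case: (Hem0 j).
  by split=> // j _; case: (Hem0 j).
move=> [p2 nr2 er2 nm2 em2] /= [-> [/= Hn2 [/= _ [/= _ [/= Hem2 [/= H12 Hodd2]]]]]].
have m_def : nr2 0 = m by rewrite Hn2 // /m size_mkseq.
have C_def : [seq y <- output stf | join_below s y == y] = survivors s em2 (nr2 0).
  by rewrite /output (survivorsE s _ Hem2) Hn2.
rewrite C_def -m_def.
have := filter_prog_correct scratch_gt0 closure_prog_filter_at er2 H12 (erefl (nr2 0)) Hodd2.
rewrite add0n; apply: reaches_impl => st [Hpc [Hsize Hem]]; split=> //.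
rewrite /output Hsize; apply: (@eq_from_nth _ bot); rewrite size_mkseq // => q lt_q.
by rewrite nth_mkseq // Hem.
Qed.

Lemma closure_prog_run (s : seq T) k (stf : state) :
  0 < size s -> halts_in Pf k (init_state s) stf ->
  exists k' st',
    [/\ k' <= 2 * k + 8 * size s + 18 + size (output stf) * (9 * size s + 21),
        halts_in closure_prog k' (init_state s) st' &
        output st' = [seq y <- output stf | join_below s y == y]].
Proof.
move=> s_gt0 Hh; have [st' [k' [le_k' [R [Hpc Hout]]]]] := closure_prog_reaches s_gt0 Hh.
exists k', st'; split=> //; apply/halts_inE; split=> //.
by case: st' Hpc {R Hout} => p' ? ? ? ? /= ->; rewrite /step (closure_prog_filter_at 37).
Qed.

End Compilation.

Local Open Scope fset_scope.

Theorem mainTheorem15 (d : Order.disp_t) (T : bJoinSemilatticeType d)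
    (f : {fset T} -> {fset T}) (t : nat -> nat) (Pf : program) (c : nat) :
  computes_within Pf f (fun S => c * (t #|` S| + 1)) ->
  (forall S : {fset T}, closure_set S `<=` f S) ->
  exists (P : program) (c' : nat),
    computes_within P (@closure_set d T)
      (fun S => c' * (t #|` S| + #|` f S| * #|` S| + 1)).
Proof.
move=> HPf Hcl; exists (closure_prog Pf), (2 * c + 60)%N => s s_uniq.
have cardS : #|` [fset x | x in s]| = size s by rewrite card_fseq undup_id.
rewrite cardS; case: (posnP (size s)) => [/size0nil -> | s_gt0].
  have [st [Hh out_st]] := @closure_prog_nil d T Pf.
  by exists 2, st; rewrite out_st closure_set_nil; split=> //; nia.
have [k [stf [le_k [Hh [uniq_F F_def]]]]] := HPf s s_uniq.
have [k' [st' [le_k' Hh' out_st']]] := closure_prog_run s_gt0 Hh.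
have sCF := Hcl [fset x | x in s]; rewrite -F_def in sCF.
have cardF : #|` f [fset x | x in s]| = size (output stf).
  by rewrite -F_def card_fseq undup_id.
have F_gt0 : 0 < size (output stf).
  rewrite -cardF cardfs_gt0; apply/fset0Pn; exists \bot%O.
  by rewrite -F_def (fsubsetP sCF _ (bottom_in_closure_set s)).
exists k', st'; rewrite out_st' filter_uniq // closure_set_filter //; split=> //.
rewrite cardF; apply: leq_trans le_k' _; rewrite cardS in le_k; nia.
Qed.
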